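(* Let $\mathcal{X}\subseteq\mathbb{R}^d$ be nonempty, closed and convex, and let $f=\frac1n\sum_{i=1}^nf_i$ with each $f_i:\mathbb{R}^d\to\mathbb{R}$ differentiable; let $x_\star\in\operatorname{arg\,min}_{x\in\mathcal{X}}f(x)$ and assume each $f_i$ has a constrained minimizer $x_{\star,i}\in\operatorname{arg\,min}_{x\in\mathcal{X}}f_i(x)$; let $D:=\max_{1\le i\le n}\|x_{\star,i}-x_\star\|$. Let $\{x_k\}\subseteq\mathcal{X}$ be generated by $x_{k+1}\in\operatorname{arg\,min}_{z\in\mathcal{X}\cap\mathcal{B}(x_k,t_k)}\langle\nabla f_{i_k}(x_k),z\rangle$ with $i_k\in\{1,\dots,n\}$. Fix $k$ and assume $\nabla f_{i_k}(x_k)\ne\nabla f_{i_k}(x_{\star,i_k})$ and $$0<t_k\le\frac{\langle\nabla f_{i_k}(x_k)-\nabla f_{i_k}(x_{\star,i_k}),x_k-x_{\star,i_k}\rangle}{\|\nabla f_{i_k}(x_k)-\nabla f_{i_k}(x_{\star,i_k})\|}.$$ Then $\|x_{k+1}-x_{\star,i_k}\|^2\le\|x_k-x_{\star,i_k}\|^2-t_k^2$, and consequently $\|x_{k+1}-x_\star\|^2\le\|x_k-x_\star\|^2-t_k^2+2Dt_k$.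
   Context: $\|\cdot\|$ is the Euclidean norm, $\mathcal{B}(x,t):=\{y:\|y-x\|\le t\}$. *)

From HB Require Import structures.
From mathcomp Require Import all_boot all_order all_algebra.
From mathcomp Require Import all_classical all_reals all_analysis.
Set Implicit Arguments. Unset Strict Implicit. Unset Printing Implicit Defensive.
Import Order.TTheory GRing.Theory Num.Theory.
Import numFieldNormedType.Exports.
Local Open Scope ring_scope.
Local Open Scope classical_set_scope.

(* R^d is modelled as row vectors 'rV[R]_d.  The library norm on 'rV is the
   max-norm, so the Euclidean inner product and norm are defined here. *)
Definition dotv (R : realType) (d : nat) (u v : 'rV[R]_d) : R :=
  \sum_(j < d) u ord0 j * v ord0 j.

Definition enorm (R : realType) (d : nat) (u : 'rV[R]_d) : R :=
  Num.sqrt (dotv u u).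

Definition convex_set_of (R : realType) (d : nat) (X : set 'rV[R]_d) : Prop :=
  forall x y, X x -> X y -> forall l : R, 0 <= l <= 1 ->
    X (l *: x + (1 - l) *: y).

Definition is_argmin (R : realType) (d : nat) (X : set 'rV[R]_d)
  (h : 'rV[R]_d -> R) (m : 'rV[R]_d) : Prop :=
  X m /\ forall z, X z -> h m <= h z.

Definition is_gradient (R : realType) (d : nat) (h : 'rV[R]_d -> R)
  (g : 'rV[R]_d -> 'rV[R]_d) : Prop :=
  forall x, differentiable h x /\ forall v, 'd h x v = dotv (g x) v.

Definition eball (R : realType) (d : nat) (c : 'rV[R]_d) (r : R) : set 'rV[R]_d :=
  [set y | enorm (y - c) <= r].

From HB Require Import structures.
From mathcomp Require Import all_boot all_order all_algebra.
From mathcomp Require Import all_classical all_reals all_analysis.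
From mathcomp Require Import ring lra.
Import Order.TTheory GRing.Theory Num.Theory.
Import numFieldNormedType.Exports.
Local Open Scope ring_scope.
Local Open Scope classical_set_scope.

(* Write p for the minimizer of f_i, u = x_k - p, v = x_{k+1} - x_k and
   a = grad f_i(x_k) - grad f_i(p).  If x_{k+1} can be moved a little towards
   p inside the ball, minimality of the linear step and first-order optimality
   of p give <a, x_{k+1} - p> <= 0; together with <a, u> >= t |a| and |v| <= t
   this forces v = -(t/|a|) a, whence <u, v> <= -t^2.  Otherwise x_{k+1} lies
   on the sphere and the segment to p leaves the ball, which directly gives
   <u, v> <= -|v|^2 = -t^2.  Either way |x_{k+1} - p|^2 = |u|^2 + 2<u, v> +
   |v|^2 <= |u|^2 - t^2.  The bound around x_star follows by recentring at
   x_star, paying 2 <v, p - x_star> <= 2 t D. *)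

Section InnerProduct.
Context {R : realType} {d : nat}.
Implicit Types (u v w : 'rV[R]_d) (k : R).

Lemma dotvC u v : dotv u v = dotv v u.
Proof. by apply: eq_bigr => j _; rewrite mulrC. Qed.

Lemma dotvDl u v w : dotv (u + v) w = dotv u w + dotv v w.
Proof. by rewrite /dotv -big_split; apply: eq_bigr => j _; rewrite !mxE mulrDl. Qed.

Lemma dotvZl k u v : dotv (k *: u) v = k * dotv u v.
Proof. by rewrite /dotv mulr_sumr; apply: eq_bigr => j _; rewrite !mxE mulrA. Qed.

Lemma dotvNl u v : dotv (- u) v = - dotv u v.
Proof. by rewrite -scaleN1r dotvZl mulN1r. Qed.

Lemma dotvBl u v w : dotv (u - v) w = dotv u w - dotv v w.
Proof. by rewrite dotvDl dotvNl. Qed.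

Lemma dotvDr u v w : dotv u (v + w) = dotv u v + dotv u w.
Proof. by rewrite dotvC dotvDl !(dotvC u). Qed.

Lemma dotvZr k u v : dotv u (k *: v) = k * dotv u v.
Proof. by rewrite dotvC dotvZl dotvC. Qed.

Lemma dotvNr u v : dotv u (- v) = - dotv u v.
Proof. by rewrite dotvC dotvNl dotvC. Qed.

Lemma dotv0l v : dotv 0 v = 0.
Proof. by rewrite -(scale0r 0) dotvZl mul0r. Qed.

Lemma dotvv_ge0 u : 0 <= dotv u u.
Proof. by apply: sumr_ge0 => j _; rewrite -expr2 sqr_ge0. Qed.

Lemma dotvv_eq0 u : (dotv u u == 0) = (u == 0).
Proof.
apply/idP/eqP => [|->]; last by rewrite dotv0l.
rewrite psumr_eq0 => [/allP u0|j _]; last by rewrite -expr2 sqr_ge0.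
apply/rowP => j; rewrite mxE; apply/eqP.
by rewrite -sqrf_eq0 expr2 (implyP (u0 j (mem_index_enum j))).
Qed.

Lemma enorm_ge0 u : 0 <= enorm u.
Proof. exact: sqrtr_ge0. Qed.

Lemma enorm_sqr u : enorm u ^+ 2 = dotv u u.
Proof. by rewrite sqr_sqrtr // dotvv_ge0. Qed.

Lemma enorm_gt0 u : (0 < enorm u) = (u != 0).
Proof. by rewrite lt0r enorm_ge0 andbT -sqrf_eq0 enorm_sqr dotvv_eq0. Qed.

Lemma enorm_le k u : 0 <= k -> (enorm u <= k) = (enorm u ^+ 2 <= k ^+ 2).
Proof. by move=> k_ge0; rewrite ler_pXn2r ?nnegrE ?enorm_ge0. Qed.

Lemma enormD_sqr u v :
  enorm (u + v) ^+ 2 = enorm u ^+ 2 + 2 * dotv u v + enorm v ^+ 2.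
Proof. by rewrite !enorm_sqr !(dotvDl, dotvDr) (dotvC v u); ring. Qed.

Lemma enorm_scale_sqr k u : enorm (k *: u) ^+ 2 = k ^+ 2 * enorm u ^+ 2.
Proof. by rewrite !enorm_sqr dotvZl dotvZr mulrA -expr2. Qed.

Lemma dotv_le_enorm u v : dotv u v <= enorm u * enorm v.
Proof.
have [->|u0] := eqVneq u 0; first by rewrite dotv0l mulr_ge0 ?enorm_ge0.
have [->|v0] := eqVneq v 0; first by rewrite dotvC dotv0l mulr_ge0 ?enorm_ge0.
set A := enorm u; set B := enorm v.
have A0 : 0 < A by rewrite enorm_gt0.
have B0 : 0 < B by rewrite enorm_gt0.
have := dotvv_ge0 (B *: u - A *: v).
rewrite -enorm_sqr enormD_sqr enorm_scale_sqr.
rewrite -scaleNr enorm_scale_sqr dotvZl dotvZr -/A -/B => nonneg.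
have : 0 <= A * B * (A * B - dotv u v) by nra.
by rewrite pmulr_rge0 ?mulr_gt0 // subr_ge0.
Qed.

Lemma dotv_le_opp_sqr (a u v : 'rV[R]_d) (t : R) :
  a != 0 -> t * enorm a <= dotv a u -> enorm v <= t -> dotv a (u + v) <= 0 ->
  dotv u v <= - t ^+ 2.
Proof.
move=> a_neq0 au_ge vt auv_le0.
have Na_gt0 : 0 < enorm a by rewrite enorm_gt0.
have t_ge0 : 0 <= t := le_trans (enorm_ge0 v) vt.
set c := t / enorm a.
have c_ge0 : 0 <= c := divr_ge0 t_ge0 (ltW Na_gt0).
have cNa : c * enorm a = t by rewrite /c mulfVK // gt_eqF.
have cau : t ^+ 2 <= c * dotv a u.
  by have := ler_wpM2l c_ge0 au_ge; rewrite mulrCA cNa -expr2.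
(* equality in Cauchy-Schwarz: |v| <= t and <a, v> <= -t |a| force v = -c a *)
have v_eq : v = - (c *: a).
  apply/eqP; rewrite -subr_eq0 opprK -dotvv_eq0 eq_le dotvv_ge0 andbT.
  rewrite -enorm_sqr enormD_sqr enorm_scale_sqr dotvZr (dotvC v a).
  have : enorm v ^+ 2 <= t ^+ 2 by rewrite -enorm_le.
  have : c ^+ 2 * enorm a ^+ 2 = t ^+ 2 by rewrite -exprMn cNa.
  rewrite dotvDr in auv_le0; nra.
by rewrite v_eq dotvNr dotvZr (dotvC u a) lerN2.
Qed.

End InnerProduct.

Lemma quadratic_small_step {R : realFieldType} (V T b W : R) :
  0 <= W -> V <= T -> b < 0 \/ V < T ->
  exists2 l, 0 < l <= 1 & V + 2 * l * b + l ^+ 2 * W <= T.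
Proof.
move=> W_ge0 VT [b_lt0 | VT_lt].
  have Wb_gt0 : 0 < W - b by lra.
  set l := - b / (W - b).
  have lE : l * (W - b) = - b by rewrite mulfVK // gt_eqF.
  have l_gt0 : 0 < l by rewrite divr_gt0 ?oppr_gt0.
  exists l; last by nra.
  by rewrite l_gt0 /= ler_pdivrMr // mul1r; lra.
set r := T - V; set K := b ^+ 2 + 1 + W.
have r_gt0 : 0 < r by rewrite subr_gt0.
have K_gt0 : 0 < K by rewrite /K; have := sqr_ge0 b; lra.
have Kr_gt0 : 0 < K + r by rewrite addr_gt0.
set l := r / (K + r).
have lE : l * (K + r) = r by rewrite mulfVK // gt_eqF.
have l_gt0 : 0 < l by rewrite divr_gt0.
have l_le1 : l <= 1 by rewrite ler_pdivrMr // mul1r lerDr ltW.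
exists l; first by rewrite l_gt0 l_le1.
have : 2 * b <= b ^+ 2 + 1 by have := sqr_ge0 (b - 1); lra.
rewrite /K /r in lE; nra.
Qed.

Lemma argmin_diff_ge0 {R : realType} {d : nat} (X : set 'rV[R]_d)
    (h : 'rV[R]_d -> R) (p z : 'rV[R]_d) :
  convex_set_of X -> is_argmin X h p -> differentiable h p -> X z ->
  0 <= 'd h p (z - p).
Proof.
move=> convX [Xp p_min] dh Xz; set v := z - p.
have right_of_0 : 0^'+ `=>` (0 : R)^'.
  by apply: within_subset => s /gt_eqF ->.
have quot_cvg0 : (fun s => s^-1 *: ((h \o shift p) (s *: v) - h p)) @ 0^'
    --> 'D_v h p := @diff_derivable _ _ _ h p v dh.
have quot_cvg := cvg_trans (cvg_fmap2 right_of_0) quot_cvg0.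
rewrite -deriveE //; apply: (cvgr_to_ge quot_cvg); near=> s.
have s_gt0 : 0 < s by near: s; exact: nbhs_right_gt.
have s_lt1 : s < 1 by near: s; exact: nbhs_right_lt.
rewrite /= /shift.
have -> : s *: v + p = s *: z + (1 - s) *: p.
  by rewrite /v scalerBr scalerBl scale1r addrA addrAC.
rewrite /GRing.scale /=; apply: mulr_ge0; first by rewrite invr_ge0 ltW.
by rewrite subr_ge0; apply/p_min/convX; rewrite ?(ltW s_gt0) ?(ltW s_lt1).
Unshelve. all: by end_near.
Qed.

Section LinearStepDescent.
Context {R : realType} {d : nat}.
Context {X : set 'rV[R]_d} {g gs p x y : 'rV[R]_d} {t : R}.
Hypotheses (convX : convex_set_of X) (Xp : X p)
  (p_opt : forall z, X z -> 0 <= dotv gs (z - p))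
  (y_min : is_argmin (X `&` eball x t) (dotv g) y)
  (g_neq : g != gs)
  (t_le : t * enorm (g - gs) <= dotv (g - gs) (x - p)).

Lemma dotv_step_le_of_inner_segment (l : R) : 0 < l <= 1 ->
  enorm (y - x + l *: (p - y)) <= t -> dotv (x - p) (y - x) <= - t ^+ 2.
Proof.
move=> /andP[l_gt0 l_le1] z_ball; have [[Xy y_ball] y_le] := y_min.
set z := y + l *: (p - y).
have Xz : X z.
  have -> : z = l *: p + (1 - l) *: y.
    by rewrite /z scalerBr scalerBl scale1r addrCA addrA.
  by apply: convX => //; rewrite (ltW l_gt0) l_le1.
have g_ge0 : 0 <= dotv g (p - y).
  have : dotv g y <= dotv g z by apply: y_le; split; rewrite // /eball /= addrAC.
  by rewrite /z dotvDr dotvZr lerDl pmulr_rge0.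
have gs_le0 : dotv gs (p - y) <= 0.
  by rewrite -opprB dotvNr oppr_le0 p_opt.
have a_neq0 : g - gs != 0 by rewrite subr_eq0.
apply: (dotv_le_opp_sqr _ _ _ _ a_neq0 t_le y_ball).
have -> : x - p + (y - x) = - (p - y) by rewrite opprB addrC addrA subrK.
by rewrite dotvNr dotvBl; lra.
Qed.

Lemma argmin_linear_step_descent :
  enorm (y - p) ^+ 2 <= enorm (x - p) ^+ 2 - t ^+ 2.
Proof.
have [[_ y_ball] _] := y_min; rewrite /eball /= in y_ball.
set u := x - p; set v := y - x.
have t_ge0 : 0 <= t := le_trans (enorm_ge0 v) y_ball.
have vt2 : enorm v ^+ 2 <= t ^+ 2 by rewrite -enorm_le.
have yp : y - p = u + v by rewrite /u /v [RHS]addrC addrA subrK.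
have vpy : dotv v (p - y) = - dotv u v - enorm v ^+ 2.
  by rewrite -opprB yp dotvNr dotvDr enorm_sqr (dotvC v u) opprD.
rewrite yp enormD_sqr.
suff : 2 * dotv u v + enorm v ^+ 2 <= - t ^+ 2 by lra.
case: (boolP ((dotv v (p - y) < 0) || (enorm v ^+ 2 < t ^+ 2))) => [/orP inner|].
  have [l l01 l_ok] := quadratic_small_step _ _ _ _ (sqr_ge0 (enorm (p - y))) vt2 inner.
  have : enorm (v + l *: (p - y)) <= t.
    by rewrite enorm_le // enormD_sqr enorm_scale_sqr dotvZr; lra.
  by move=> /(dotv_step_le_of_inner_segment _ l01); lra.
by rewrite negb_or -!leNgt => /andP[]; lra.
Qed.

End LinearStepDescent.

Lemma recenter_descent {R : realType} {d : nat} (c p x y : 'rV[R]_d) (t D : R) :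
  enorm (y - p) ^+ 2 <= enorm (x - p) ^+ 2 - t ^+ 2 ->
  enorm (y - x) <= t -> enorm (p - c) <= D ->
  enorm (y - c) ^+ 2 <= enorm (x - c) ^+ 2 - t ^+ 2 + 2 * D * t.
Proof.
move=> descent yx_le pc_le.
have -> : y - c = (y - p) + (p - c) by rewrite addrA subrK.
have -> : x - c = (x - p) + (p - c) by rewrite addrA subrK.
have shift : dotv (y - p) (p - c) = dotv (x - p) (p - c) + dotv (y - x) (p - c).
  by rewrite -dotvDl [x - p + _]addrC addrA subrK.
have := ler_pM (enorm_ge0 _) (enorm_ge0 _) yx_le pc_le.
have := dotv_le_enorm (y - x) (p - c).
rewrite (enormD_sqr (y - p)) (enormD_sqr (x - p)) shift; lra.
Qed.

Theorem theorem12 (R : realType) (d n : nat) (X : set 'rV[R]_d)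
  (fs : 'I_n -> 'rV[R]_d -> R) (grad : 'I_n -> 'rV[R]_d -> 'rV[R]_d)
  (xstar : 'rV[R]_d) (xs : 'I_n -> 'rV[R]_d)
  (x : nat -> 'rV[R]_d) (t : nat -> R) (ik : nat -> 'I_n) (k : nat) :
  (0 < n)%N ->
  X !=set0 -> closed X -> convex_set_of X ->
  (forall i, is_gradient (fs i) (grad i)) ->
  is_argmin X (fun y => n%:R^-1 * \sum_(i < n) fs i y) xstar ->
  (forall i, is_argmin X (fs i) (xs i)) ->
  let D := \big[Num.max/0]_(i < n) enorm (xs i - xstar) in
  X (x k) ->
  is_argmin (X `&` eball (x k) (t k))
    (fun z => dotv (grad (ik k) (x k)) z) (x k.+1) ->
  grad (ik k) (x k) != grad (ik k) (xs (ik k)) ->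
  0 < t k ->
  t k <= dotv (grad (ik k) (x k) - grad (ik k) (xs (ik k))) (x k - xs (ik k))
         / enorm (grad (ik k) (x k) - grad (ik k) (xs (ik k))) ->
  enorm (x k.+1 - xs (ik k)) ^+ 2 <= enorm (x k - xs (ik k)) ^+ 2 - t k ^+ 2 /\
  enorm (x k.+1 - xstar) ^+ 2 <= enorm (x k - xstar) ^+ 2 - t k ^+ 2 + 2 * D * t k.
Proof.
move=> _ _ _ convX grad_fs _ xs_min D _ step_min g_neq _ t_le.
set i := ik k in step_min g_neq t_le *.
have [[diff_fs fs_grad] xs_i_min] := (grad_fs i (xs i), xs_min i).
have xs_opt z : X z -> 0 <= dotv (grad i (xs i)) (z - xs i).
  by move=> Xz; rewrite -fs_grad; exact: argmin_diff_ge0 convX xs_i_min diff_fs Xz.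
have a_gt0 : 0 < enorm (grad i (x k) - grad i (xs i)) by rewrite enorm_gt0 subr_eq0.
rewrite ler_pdivlMr // in t_le.
have descent := argmin_linear_step_descent convX xs_i_min.1 xs_opt step_min g_neq t_le.
split=> //; apply: recenter_descent descent step_min.1.2 _.
exact: (le_bigmax _ (fun j => enorm (xs j - xstar)) i).
Qed.
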